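(* Let $\Omega\in\{\Omega_A,\Omega_B,\Omega_C\}$, let $x,y$ be commuting indeterminates and $f(x,y)=256x+3(4y-3)(4y+1)\in\mathbb C[x,y]$. For every $p(x,y)\in\mathbb C[x,y]$, one has $\sharp(p(\Omega,\delta))=0$ if and only if $f(x,y)$ divides $p(x,y)$ in $\mathbb C[x,y]$.
   Context: All algebras are unital associative over $\mathbb C$, $[x,y]=xy-yx$, $\mathbf i=\sqrt{-1}$. $U(\mathfrak{sl}_2)$ is generated by $E,F,H$ with $[H,E]=2E$, $[H,F]=-2F$, $[E,F]=H$; $\Lambda=EF+FE+\frac{H^2}{2}$. $\Re$ is generated by $A,B,C,\Delta$ with $[A,B]=[B,C]=[C,A]=2\Delta$ and with $\alpha=[A,\Delta]+AC-BA$, $\beta=[B,\Delta]+BA-CB$, $\gamma=[C,\Delta]+CB-AC$ central; $\delta=A+B+C$ (central). $\Omega_A=\Delta^2+\tfrac{BAC+CAB}{2}+A^2+B\gamma-C\beta-A\delta$, $\Omega_B=\Delta^2+\tfrac{CBA+ABC}{2}+B^2+C\alpha-A\gamma-B\delta$, $\Omega_C=\Delta^2+\tfrac{ACB+BCA}{2}+C^2+A\beta-B\alpha-C\delta$; these are central, so $p(\Omega,\delta)$ is well defined. $\sharp:\Re\to U(\mathfrak{sl}_2)$ is the unique algebra homomorphism with $A\mapsto \frac{(E+F-2)(E+F+2)}{16}$, $B\mapsto\frac{(H-2)(H+2)}{16}$, $C\mapsto\frac{(\mathbf iE-\mathbf iF-2)(\mathbf iE-\mathbf iF+2)}{16}$,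 $\Delta\mapsto\frac{(H+2)F^2-(H-2)E^2}{64}$. *)

From HB Require Import structures.
From mathcomp Require Import all_boot all_order all_algebra.
From mathcomp Require Import complex.
From mathcomp Require Import Rstruct.
Set Implicit Arguments. Unset Strict Implicit. Unset Printing Implicit Defensive.
Import Order.TTheory GRing.Theory Num.Theory.
Local Open Scope ring_scope.

Definition CC : fieldType := (Rdefinitions.R)[i]%C.
Definition iC : CC := Complex 0 1.

Definition comm (A : algType CC) (x y : A) : A := x * y - y * x.

Definition sl2_rel (A : algType CC) (E F H : A) : Prop :=
  [/\ comm H E = 2%:R * E, comm H F = - (2%:R * F) & comm E F = H].

(** An element of U(sl_2) is described uniformly as a noncommutative
    polynomial expression [t] in the generators E, F, H (i.e. a function
    that, for every C-algebra A and every E F H in A, produces an element of A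
    using the algebra operations). Such an element is zero in U(sl_2) iff
    it vanishes for every triple E, F, H satisfying the sl_2 relations in every
    C-algebra (universal property of U(sl_2), which is itself such an algebra). *)
Definition U_sl2_zero (t : forall A : algType CC, A -> A -> A -> A) : Prop :=
  forall (A : algType CC) (E F H : A), sl2_rel E F H -> t A E F H = 0.

(** The Racah algebra expressions, written for arbitrary elements a b c d
    (standing for A, B, C, Delta) of a C-algebra. *)
Section Racah.
Variable (R : algType CC).
Variables (a b c d : R).
Definition r_alpha : R := comm a d + a * c - b * a.
Definition r_beta  : R := comm b d + b * a - c * b.
Definition r_gamma : R := comm c d + c * b - a * c.
Definition r_delta : R := a + b + c.
Definition r_OmegaA : R :=
  d ^+ 2 + (2%:R : CC)^-1 *: (b * a * c + c * a * b) + a ^+ 2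
  + b * r_gamma - c * r_beta - a * r_delta.
Definition r_OmegaB : R :=
  d ^+ 2 + (2%:R : CC)^-1 *: (c * b * a + a * b * c) + b ^+ 2
  + c * r_alpha - a * r_gamma - b * r_delta.
Definition r_OmegaC : R :=
  d ^+ 2 + (2%:R : CC)^-1 *: (a * c * b + b * c * a) + c ^+ 2
  + a * r_beta - b * r_alpha - c * r_delta.
End Racah.

Section Sharp.
Variable (A : algType CC).
Variables (E F H : A).
Definition sharpA : A := (16%:R : CC)^-1 *: ((E + F - 2%:R) * (E + F + 2%:R)).
Definition sharpB : A := (16%:R : CC)^-1 *: ((H - 2%:R) * (H + 2%:R)).
Definition sharpC : A :=
  (16%:R : CC)^-1 *: ((iC *: E - iC *: F - 2%:R) * (iC *: E - iC *: F + 2%:R)).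
Definition sharpDelta : A :=
  (64%:R : CC)^-1 *: ((H + 2%:R) * F ^+ 2 - (H - 2%:R) * E ^+ 2).
End Sharp.

Inductive OmegaIdx := OmA | OmB | OmC.

(** sharp(Omega) and sharp(delta): since sharp is an algebra homomorphism,
    these are the Racah expressions evaluated at the images of A, B, C, Delta. *)
Definition sharpOmega (k : OmegaIdx) (A : algType CC) (E F H : A) : A :=
  let a := sharpA E F in let b := sharpB H in
  let c := sharpC E F in let d := sharpDelta E F H in
  match k with
  | OmA => r_OmegaA a b c d
  | OmB => r_OmegaB a b c d
  | OmC => r_OmegaC a b c d
  end.
Definition sharpdelta (A : algType CC) (E F H : A) : A :=
  r_delta (sharpA E F) (sharpB H) (sharpC E F).

(** Bivariate polynomials C[x,y] are represented as {poly {poly CC}}: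
    the inner variable is x, the outer variable is y.
    [peval2 p u v] = p(u, v), evaluating x at u and y at v (in a possibly
    noncommutative algebra; the monomial x^j y^i is sent to u^j v^i). *)
Definition peval2 (A : algType CC) (p : {poly {poly CC}}) (u v : A) : A :=
  \sum_(i < size p) \sum_(j < size p`_i) (p`_i)`_j *: (u ^+ j * v ^+ i).

Definition polX : {poly {poly CC}} := ('X)%:P.
Definition polY : {poly {poly CC}} := 'X.

Definition fxy : {poly {poly CC}} :=
  256%:R * polX + 3%:R * (4%:R * polY - 3%:R) * (4%:R * polY + 1).

From Stdlib Require Import ZArith.
From HB Require Import structures.
From mathcomp Require Import all_boot all_order all_algebra.
From mathcomp Require Import complex Rstruct ssrZ.
From mathcomp Require Import ring zify.
Set Implicit Arguments. Unset Strict Implicit. Unset Printing Implicit Defensive.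
Import Order.TTheory GRing.Theory Num.Theory.
Local Open Scope ring_scope.

(** The identity sharp(Omega) = g(sharp(delta)), where g(y) = -3(4y-3)(4y+1)/256, so that
    f(x, y) = 256 (x - g(y)), holds for every sl_2-triple E, F, H in any algebra; it is
    verified by rewriting both sides to the PBW normal form F^a H^b E^c.  Hence
    sharp(p(Omega, delta)) = q(sharp(delta)) with q(y) = p(g(y), y), and f | p iff q = 0 by
    the factor theorem in x.  Conversely, on the irreducible representation of dimension
    n + 1, sharp(delta) = (Lambda - 6)/8 is the scalar (n(n+2)/2 - 6)/8; these scalars are
    pairwise distinct, so if sharp(p(Omega, delta)) = 0 then q has infinitely many roots. *)

Lemma eqr_natCC (m n : nat) : ((m%:R : CC) == n%:R) = (m == n).
Proof. exact: (@eqr_nat (complex Rdefinitions.R)). Qed.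

Lemma natrCC_eq0 (n : nat) : ((n%:R : CC) == 0) = (n == 0%N).
Proof. exact: (@pnatr_eq0 (complex Rdefinitions.R)). Qed.

(** * Normal forms in U(sl_2) *)

(** [(a, e)] stands for [a / 2^e]: enough for all scalars of the computation, and
    exactly computable. *)
Definition dyadic := (Z * nat)%type.

Definition dyadic_val (a : dyadic) : CC := (int_of_Z a.1)%:~R / 2%:R ^+ a.2.

Definition dyadic_mul (a b : dyadic) : dyadic := (a.1 * b.1, (a.2 + b.2)%N).

Definition dyadic_add (a b : dyadic) : dyadic :=
  let e := maxn a.2 b.2 in (a.1 * 2%:R ^+ (e - a.2) + b.1 * 2%:R ^+ (e - b.2), e).

Lemma exp2CC_neq0 (k : nat) : (2%:R : CC) ^+ k != 0.
Proof. by rewrite expf_neq0 ?natrCC_eq0. Qed.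

Lemma dyadic_valM a b : dyadic_val (dyadic_mul a b) = dyadic_val a * dyadic_val b.
Proof. by rewrite /dyadic_val rmorphM intrM exprD invfM mulrACA. Qed.

Lemma dyadic_val_lift (a : dyadic) e : (a.2 <= e)%N ->
  (int_of_Z (a.1 * 2%:R ^+ (e - a.2)))%:~R / 2%:R ^+ e = dyadic_val a.
Proof.
move=> le_ae; rewrite (rmorphM int_of_Z) (rmorphXn int_of_Z) (rmorph_nat int_of_Z).
rewrite intrM (rmorphXn intr) rmorph_nat -{2}(subnK le_ae) exprD invfM mulrACA.
by rewrite mulrA divfK ?exp2CC_neq0.
Qed.

Lemma dyadic_valD a b : dyadic_val (dyadic_add a b) = dyadic_val a + dyadic_val b.
Proof.
rewrite {1}/dyadic_val /= (rmorphD int_of_Z) intrD mulrDl.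
by rewrite !dyadic_val_lift ?leq_maxl ?leq_maxr.
Qed.

Lemma dyadic_val_int (z : Z) : dyadic_val (z, 0%N) = (int_of_Z z)%:~R.
Proof. by rewrite /dyadic_val expr0 invr1 mulr1. Qed.

Lemma dyadic_val_nat (n : nat) : dyadic_val (n%:R, 0%N) = n%:R.
Proof. by rewrite dyadic_val_int (rmorph_nat int_of_Z) (rmorph_nat intr). Qed.

Lemma dyadic_val_half (k : nat) : dyadic_val (1, k) = (2 ^ k)%N%:R^-1.
Proof. by rewrite /dyadic_val (rmorph1 int_of_Z) mul1r natrX. Qed.

Inductive letter := LF | LH | LE.

Definition letter_eqb (x y : letter) : bool :=
  match x, y with LF, LF | LH, LH | LE, LE => true | _, _ => false end.

Lemma letter_eqP : Equality.axiom letter_eqb.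
Proof. by do 2 case; constructor. Qed.

HB.instance Definition _ := hasDecEq.Build letter letter_eqP.

Definition term := (dyadic * seq letter)%type.

Definition terms_scale (c : dyadic) (l : seq term) : seq term :=
  [seq (dyadic_mul c t.1, t.2) | t <- l].

Definition terms_mul (l1 l2 : seq term) : seq term :=
  [seq (dyadic_mul t1.1 t2.1, t1.2 ++ t2.2) | t1 <- l1, t2 <- l2].

Inductive expr :=
| Letter of letter
| Nat of nat
| Add of expr & expr
| Mul of expr & expr
| Opp of expr
| Halve of nat & expr
| Pow of expr & nat.

Definition expr_sub (a b : expr) : expr := Add a (Opp b).

Fixpoint expand (e : expr) : seq term :=
  match e with
  | Letter x => [:: ((1, 0%N), [:: x])]
  | Nat n => [:: ((n%:R, 0%N), [::])]
  | Add a b => expand a ++ expand b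
  | Mul a b => terms_mul (expand a) (expand b)
  | Opp a => terms_scale (-1, 0%N) (expand a)
  | Halve k a => terms_scale (1, k) (expand a)
  | Pow a n => iter n (terms_mul (expand a)) [:: ((1, 0%N), [::])]
  end.

(** Rewrites the leftmost descent of [w] for the order F < H < E by one of the relations
    HF = FH - 2F, EF = FE + H, EH = HE - 2E; the irreducible words are the PBW monomials
    F^a H^b E^c. *)
Fixpoint rewrite_word (w : seq letter) : option (seq term) :=
  match w with
  | LH :: LF :: v => Some [:: ((1, 0%N), LF :: LH :: v); ((- 2%:R, 0%N), LF :: v)]
  | LE :: LF :: v => Some [:: ((1, 0%N), LF :: LE :: v); ((1, 0%N), LH :: v)]
  | LE :: LH :: v => Some [:: ((1, 0%N), LH :: LE :: v); ((- 2%:R, 0%N), LE :: v)]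
  | x :: v => omap (map (fun t : term => (t.1, x :: t.2))) (rewrite_word v)
  | [::] => None
  end.

Definition rewrite_term (t : term) : seq term :=
  if rewrite_word t.2 is Some l then terms_scale t.1 l else [:: t].

Definition rewrite_step (l : seq term) : seq term := flatten (map rewrite_term l).

Fixpoint insert_term (t : term) (l : seq term) : seq term :=
  if l is s :: l' then
    if s.2 == t.2 then (dyadic_add s.1 t.1, s.2) :: l' else s :: insert_term t l'
  else [:: t].

Definition collect_terms (l : seq term) : seq term := foldr insert_term [::] l.

Definition drop_zero_terms (l : seq term) : seq term := [seq t <- l | t.1.1 != 0].

Fixpoint normalize (n : nat) (l : seq term) : seq term :=
  if n is n'.+1 then normalize n' (drop_zero_terms (collect_terms (rewrite_step l))) else l.

Section Evaluation.
Variables (A : algType CC) (E F H : A).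

Definition letter_val (x : letter) : A := match x with LF => F | LH => H | LE => E end.

Definition word_val (w : seq letter) : A := \prod_(x <- w) letter_val x.

Definition terms_val (l : seq term) : A := \sum_(t <- l) dyadic_val t.1 *: word_val t.2.

Fixpoint expr_val (e : expr) : A :=
  match e with
  | Letter x => letter_val x
  | Nat n => n%:R
  | Add a b => expr_val a + expr_val b
  | Mul a b => expr_val a * expr_val b
  | Opp a => - expr_val a
  | Halve k a => ((2 ^ k)%N%:R : CC)^-1 *: expr_val a
  | Pow a n => expr_val a ^+ n
  end.

Lemma terms_val_cat l1 l2 : terms_val (l1 ++ l2) = terms_val l1 + terms_val l2.
Proof. exact: big_cat. Qed.

Lemma terms_val_scale c l : terms_val (terms_scale c l) = dyadic_val c *: terms_val l.
Proof.
rewrite /terms_val big_map scaler_sumr; apply: eq_bigr => t _.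
by rewrite dyadic_valM scalerA.
Qed.

Lemma terms_val_mul l1 l2 : terms_val (terms_mul l1 l2) = terms_val l1 * terms_val l2.
Proof.
rewrite /terms_val big_allpairs_dep mulr_suml; apply: eq_bigr => t1 _.
rewrite mulr_sumr; apply: eq_bigr => t2 _.
rewrite dyadic_valM /word_val big_cat.
by rewrite -(scalerAl (dyadic_val t1.1)) -(scalerAr (dyadic_val t2.1)) scalerA.
Qed.

Lemma terms_val_unit : terms_val [:: ((1, 0%N), [::])] = 1.
Proof.
by rewrite /terms_val big_seq1 dyadic_val_int (rmorph1 int_of_Z) scale1r /word_val big_nil.
Qed.

Lemma terms_val_prepend x l :
  terms_val [seq (t.1, x :: t.2) | t <- l] = letter_val x * terms_val l.
Proof.
rewrite /terms_val big_map mulr_sumr; apply: eq_bigr => t _.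
by rewrite /word_val big_cons scalerAr.
Qed.

Lemma insert_term_val t l : terms_val (insert_term t l) = terms_val (t :: l).
Proof.
rewrite /terms_val; elim: l => [|s l IHl] //=.
case: eqP => [same_word|_]; rewrite !big_cons.
- by rewrite dyadic_valD scalerDl same_word addrCA addrA.
- by rewrite IHl big_cons addrCA.
Qed.

Lemma collect_terms_val l : terms_val (collect_terms l) = terms_val l.
Proof.
elim: l => [|t l IHl] //=.
by rewrite insert_term_val /terms_val !big_cons -/(terms_val _) IHl.
Qed.

Lemma drop_zero_terms_val l : terms_val (drop_zero_terms l) = terms_val l.
Proof.
rewrite /terms_val big_filter big_mkcond; apply: eq_bigr => [[[z e] w]] _ /=.
by case: eqP => [->|_]; rewrite /dyadic_val ?(rmorph0 int_of_Z) ?mul0r ?scale0r.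
Qed.

Lemma expand_val e : expr_val e = terms_val (expand e).
Proof.
elim: e => [x|n|a IHa b IHb|a IHa b IHb|a IHa|k a IHa|a IHa n] /=.
- by rewrite /terms_val big_seq1 dyadic_val_int (rmorph1 int_of_Z) scale1r /word_val big_seq1.
- by rewrite /terms_val big_seq1 dyadic_val_nat /word_val big_nil scaler_nat.
- by rewrite terms_val_cat IHa IHb.
- by rewrite terms_val_mul IHa IHb.
- by rewrite terms_val_scale dyadic_val_int (rmorphN1 int_of_Z) scaleN1r IHa.
- by rewrite terms_val_scale dyadic_val_half IHa.
- elim: n => [|n IHn] /=; first by rewrite terms_val_unit.
  by rewrite exprS terms_val_mul IHn IHa.
Qed.

End Evaluation.

Section Normalization.
Variables (A : algType CC) (E F H : A).
Hypothesis sl2 : sl2_rel E F H.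

Local Notation terms_val := (terms_val E F H).
Local Notation word_val := (word_val E F H).

Lemma sl2_HF : H * F = F * H - 2%:R * F.
Proof. by case: sl2 => _ /eqP; rewrite /comm subr_eq addrC => /eqP. Qed.

Lemma sl2_EF : E * F = F * E + H.
Proof. by case: sl2 => _ _ /eqP; rewrite /comm subr_eq addrC => /eqP. Qed.

Lemma sl2_EH : E * H = H * E - 2%:R * E.
Proof. by case: sl2 => HE _ _; rewrite -HE opprB addrC subrK. Qed.

Lemma rewrite_word_val w l : rewrite_word w = Some l -> word_val w = terms_val l.
Proof.
elim: w l => [|x w IHw] l //.
have shift : omap (map (fun t : term => (t.1, x :: t.2))) (rewrite_word w) = Some l ->
    word_val (x :: w) = terms_val l.
  case Ew: (rewrite_word w) => [l'|] //= [<-].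
  by rewrite terms_val_prepend -(IHw _ Ew) /word_val big_cons.
have pair c1 w1 c2 w2 : terms_val [:: (c1, w1); (c2, w2)] =
    dyadic_val c1 *: word_val w1 + dyadic_val c2 *: word_val w2.
  by rewrite /terms_val !big_cons big_nil addr0.
have coefs : dyadic_val (1, 0%N) = 1 /\ dyadic_val (- 2%:R, 0%N) = - 2%:R.
  by rewrite !dyadic_val_int (rmorph1 int_of_Z) (rmorphN int_of_Z) (rmorph_nat int_of_Z)
    (rmorphN intr) (rmorph_nat intr).
case: coefs => c1 c2.
case: x shift => shift; first exact: shift.
- case: w {IHw} shift => [|[] v] shift; try exact: shift.
  move=> [<-]; rewrite pair c1 c2 /word_val !big_cons /= mulrA sl2_HF.
  by rewrite mulrBl -!mulrA mulr_natl scale1r scaleNr scaler_nat.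
- case: w {IHw} shift => [|[] v] shift; try exact: shift.
  + move=> [<-]; rewrite pair c1 /word_val !big_cons /= mulrA sl2_EF.
    by rewrite mulrDl -!mulrA !scale1r.
  + move=> [<-]; rewrite pair c1 c2 /word_val !big_cons /= mulrA sl2_EH.
    by rewrite mulrBl -!mulrA mulr_natl scale1r scaleNr scaler_nat.
Qed.

Lemma rewrite_term_val t : terms_val (rewrite_term t) = terms_val [:: t].
Proof.
rewrite /rewrite_term; case Ew: (rewrite_word t.2) => [l|] //.
by rewrite terms_val_scale -(rewrite_word_val Ew) /terms_val big_seq1.
Qed.

Lemma rewrite_step_val l : terms_val (rewrite_step l) = terms_val l.
Proof.
elim: l => [|t l IHl] //.
rewrite /rewrite_step /= terms_val_cat rewrite_term_val -/(rewrite_step l) IHl.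
by rewrite -terms_val_cat.
Qed.

Lemma normalize_val n l : terms_val (normalize n l) = terms_val l.
Proof.
elim: n l => [|n IHn] l //=.
by rewrite IHn drop_zero_terms_val collect_terms_val rewrite_step_val.
Qed.

Lemma expr_val_eq_normalize n e1 e2 : normalize n (expand (expr_sub e1 e2)) = [::] ->
  expr_val E F H e1 = expr_val E F H e2.
Proof.
move=> nf0; apply/eqP; rewrite -subr_eq0; apply/eqP.
rewrite -[_ - _]/(expr_val E F H (expr_sub e1 e2)) expand_val -(normalize_val n) nf0.
by rewrite /terms_val big_nil.
Qed.

End Normalization.

(** * The images of Omega and delta *)

(** Syntax trees mirroring the definitions of [r_OmegaA], [r_OmegaB], [r_OmegaC],
    [r_delta] and of the images of A, B, Delta: their values are convertible to the
    corresponding terms. *)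
Definition expr_comm (a b : expr) : expr := expr_sub (Mul a b) (Mul b a).

Definition expr_alpha (a b c d : expr) : expr :=
  expr_sub (Add (expr_comm a d) (Mul a c)) (Mul b a).
Definition expr_beta (a b c d : expr) : expr :=
  expr_sub (Add (expr_comm b d) (Mul b a)) (Mul c b).
Definition expr_gamma (a b c d : expr) : expr :=
  expr_sub (Add (expr_comm c d) (Mul c b)) (Mul a c).
Definition expr_delta (a b c : expr) : expr := Add (Add a b) c.

Definition expr_OmegaA (a b c d : expr) : expr :=
  expr_sub (expr_sub (Add (Add (Add (Pow d 2)
      (Halve 1 (Add (Mul (Mul b a) c) (Mul (Mul c a) b)))) (Pow a 2))
    (Mul b (expr_gamma a b c d))) (Mul c (expr_beta a b c d))) (Mul a (expr_delta a b c)).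
Definition expr_OmegaB (a b c d : expr) : expr :=
  expr_sub (expr_sub (Add (Add (Add (Pow d 2)
      (Halve 1 (Add (Mul (Mul c b) a) (Mul (Mul a b) c)))) (Pow b 2))
    (Mul c (expr_alpha a b c d))) (Mul a (expr_gamma a b c d))) (Mul b (expr_delta a b c)).
Definition expr_OmegaC (a b c d : expr) : expr :=
  expr_sub (expr_sub (Add (Add (Add (Pow d 2)
      (Halve 1 (Add (Mul (Mul a c) b) (Mul (Mul b c) a)))) (Pow c 2))
    (Mul a (expr_beta a b c d))) (Mul b (expr_alpha a b c d))) (Mul c (expr_delta a b c)).

Definition expr_Omega (k : OmegaIdx) : expr -> expr -> expr -> expr -> expr :=
  match k with OmA => expr_OmegaA | OmB => expr_OmegaB | OmC => expr_OmegaC end.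

Definition eE := Letter LE.
Definition eF := Letter LF.
Definition eH := Letter LH.

Definition expr_sharpA : expr :=
  Halve 4 (Mul (expr_sub (Add eE eF) (Nat 2)) (Add (Add eE eF) (Nat 2))).
Definition expr_sharpB : expr := Halve 4 (Mul (expr_sub eH (Nat 2)) (Add eH (Nat 2))).
Definition expr_sharpC : expr := Halve 4 (Opp (Add (Pow (expr_sub eE eF) 2) (Nat 4))).
Definition expr_sharpDelta : expr :=
  Halve 6 (expr_sub (Mul (Add eH (Nat 2)) (Pow eF 2)) (Mul (expr_sub eH (Nat 2)) (Pow eE 2))).
Definition expr_sharpdelta : expr := expr_delta expr_sharpA expr_sharpB expr_sharpC.

Definition casimir (A : algType CC) (E F H : A) : A :=
  E * F + F * E + (2%:R : CC)^-1 *: H ^+ 2.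

Definition expr_casimir : expr := Add (Add (Mul eE eF) (Mul eF eE)) (Halve 1 (Pow eH 2)).

Definition curve : {poly CC} :=
  (256%:R : CC)^-1 *: - (3%:R * ((4%:R * 'X - 3%:R) * (4%:R * 'X + 1))).

Definition expr_curve (d : expr) : expr :=
  Halve 8 (Opp (Mul (Nat 3)
    (Mul (expr_sub (Mul (Nat 4) d) (Nat 3)) (Add (Mul (Nat 4) d) (Nat 1))))).

Lemma horner_alg_curve (A : algType CC) (v : A) : horner_alg v curve =
  (256%:R : CC)^-1 *: - (3%:R * ((4%:R * v - 3%:R) * (4%:R * v + 1))).
Proof.
rewrite linearZ /= mulr_algl !(rmorph_nat, rmorphN, rmorphM, rmorphB, rmorphD, rmorph1).
by rewrite /= horner_algX.
Qed.

Lemma iC_sqr : iC * iC = -1.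
Proof. by rewrite -expr2 (@sqr_i Rdefinitions.R). Qed.

Section SharpImage.
Variables (A : algType CC) (E F H : A).

Lemma sharpC_E : sharpC E F = (16%:R : CC)^-1 *: - ((E - F) ^+ 2 + 4%:R).
Proof.
rewrite /sharpC -scalerBr; congr (_ *: _); set X := E - F.
have iX2 : (iC *: X) * (iC *: X) = - X ^+ 2.
  by rewrite -scalerAl -scalerAr scalerA iC_sqr scaleN1r expr2.
rewrite mulrBl (mulrDr (iC *: X)) (mulrDr 2%:R) iX2 mulr_natl mulr_natr -natrM.
by rewrite addrKA -opprD.
Qed.

Lemma sharpOmega_expr k : sharpOmega k E F H =
  expr_val E F H (expr_Omega k expr_sharpA expr_sharpB expr_sharpC expr_sharpDelta).
Proof. by rewrite /sharpOmega sharpC_E; case: k. Qed.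

Lemma sharpdelta_expr : sharpdelta E F H = expr_val E F H expr_sharpdelta.
Proof. by rewrite /sharpdelta sharpC_E. Qed.

Hypothesis sl2 : sl2_rel E F H.

Lemma sharpdelta_casimir : sharpdelta E F H = (8%:R : CC)^-1 *: (casimir E F H - 6%:R).
Proof.
rewrite sharpdelta_expr -[RHS]/(expr_val E F H (Halve 3 (expr_sub expr_casimir (Nat 6)))).
by apply: (expr_val_eq_normalize sl2 (n := 30)); vm_compute.
Qed.

Lemma sharpOmega_curve k : sharpOmega k E F H = horner_alg (sharpdelta E F H) curve.
Proof.
rewrite horner_alg_curve sharpOmega_expr sharpdelta_expr.
rewrite -[RHS]/(expr_val E F H (expr_curve expr_sharpdelta)).
by apply: (expr_val_eq_normalize sl2 (n := 30)); case: k; vm_compute.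
Qed.

End SharpImage.

(** * Finite-dimensional representations *)

Section Irrep.
Variable n : nat.

(** The irreducible representation of dimension n + 1: on the standard basis,
    H e_i = (n - 2i) e_i, F e_i = e_(i+1) and E e_i = i (n + 1 - i) e_(i-1). *)
Definition irrep_weight (i : nat) : CC := n%:R - 2%:R * i%:R.
Definition irrep_coef (i : nat) : CC := i%:R * (n.+1%:R - i%:R).

Definition irrepE : 'M[CC]_n.+1 := \matrix_(i, j) ((j == i.+1 :> nat)%:R * irrep_coef j).
Definition irrepF : 'M[CC]_n.+1 := \matrix_(i, j) (i == j.+1 :> nat)%:R.
Definition irrepH : 'M[CC]_n.+1 := diag_mx (\row_i irrep_weight i).

Lemma irrepEF : irrepE * irrepF = diag_mx (\row_i irrep_coef i.+1).
Proof.
apply/matrixP => i j; rewrite -mulmxE !mxE.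
under eq_bigr => k _ do rewrite !mxE -mulrA mulr_natl mulrb.
rewrite -big_mkcond (big_ord1_eq _ (fun k => irrep_coef k * (k == j.+1)%:R)) eqSS.
case: ltnP => [_|i_ge]; first by rewrite mulr_natr.
have -> : (i : nat) = n by have := ltn_ord i; lia.
by rewrite /irrep_coef subrr mulr0 mul0rn.
Qed.

Lemma irrepFE : irrepF * irrepE = diag_mx (\row_i irrep_coef i).
Proof.
apply/matrixP => i j; rewrite -mulmxE !mxE.
case: i => [[|i] lt_i] /=.
  rewrite big1 => [|k _]; last by rewrite !mxE mul0r.
  by rewrite /irrep_coef mul0r mul0rn.
under eq_bigr => k _ do rewrite !mxE eqSS eq_sym mulr_natl mulrb.
rewrite -big_mkcond (big_ord1_eq _ (fun k => ((j : nat) == k.+1)%:R * irrep_coef j)) ltnW //.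
rewrite mulr_natl -(inj_eq val_inj) /= eq_sym.
by case: eqP => [->|]; rewrite ?mulr0n.
Qed.

Lemma irrep_sl2 : sl2_rel irrepE irrepF irrepH.
Proof.
split; rewrite /comm.
- apply/matrixP => i j; rewrite mulr_natl -!mulmxE mul_diag_mx mul_mx_diag !mxE.
  case: eqP => [j_eq|_]; last by rewrite !mul0r mulr0 subrr addr0.
  by rewrite /irrep_weight j_eq /=; ring.
- apply/matrixP => i j; rewrite mulr_natl -!mulmxE mul_diag_mx mul_mx_diag !mxE.
  case: eqP => [i_eq|_]; last by rewrite mulr0 mul0r subrr addr0 oppr0.
  by rewrite /irrep_weight i_eq /=; ring.
- apply/matrixP => i j; rewrite irrepEF irrepFE !mxE -mulrnBl; congr (_ *+ _).
  by rewrite /irrep_coef /irrep_weight; ring.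
Qed.

Lemma casimir_irrep : casimir irrepE irrepF irrepH = ((n * (n + 2))%:R / 2%:R)%:M.
Proof.
apply/matrixP => i j; rewrite /casimir irrepEF irrepFE /irrepH expr2 -mulmxE mulmx_diag.
rewrite !mxE mulrnAr -!mulrnDl; congr (_ *+ _).
by rewrite /irrep_coef /irrep_weight; field.
Qed.

End Irrep.

Definition irrep_delta (n : nat) : CC := (8%:R)^-1 * ((n * (n + 2))%:R / 2%:R - 6%:R).

Lemma sharpdelta_irrep n : sharpdelta (irrepE n) (irrepF n) (irrepH n) = (irrep_delta n)%:A.
Proof.
rewrite (sharpdelta_casimir (irrep_sl2 n)) casimir_irrep -scalemx1.
by rewrite -(scaler_nat 6 (1 : 'M_n.+1)) -scalerBl scalerA.
Qed.

Lemma irrep_delta_inj : injective irrep_delta.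
Proof.
have nz k : (k.+1%:R : CC) != 0 by rewrite natrCC_eq0.
move=> m n /(mulfI (invr_neq0 (nz 7))) /addIr /(mulIf (invr_neq0 (nz 1))) /eqP.
by rewrite eqr_natCC => /eqP; nia.
Qed.

Lemma horner_alg_peval2 (A : algType CC) (v : A) p (g h : {poly CC}) :
  horner_alg v (peval2 p g h) = peval2 p (horner_alg v g) (horner_alg v h).
Proof.
rewrite /peval2 rmorph_sum; apply: eq_bigr => i _; rewrite rmorph_sum; apply: eq_bigr => j _.
by rewrite -mul_polyC !rmorphM !rmorphXn /= horner_algC mulr_algl.
Qed.

Lemma horner_swapXY_peval2 (g : {poly CC}) p : (swapXY p).[g] = peval2 p g 'X.
Proof.
rewrite -{1}[p]coefK poly_def rmorph_sum horner_sum; apply: eq_bigr => i _.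
rewrite -mul_polyC rmorphM /= swapXY_polyC rmorphXn /= swapXY_X hornerM horner_exp hornerC.
rewrite -/(comp_poly g p`_i) comp_polyE mulr_suml; apply: eq_bigr => j _.
by rewrite scalerAl.
Qed.

Lemma peval2_horner_alg (A : algType CC) (v : A) (g : {poly CC}) p :
  peval2 p (horner_alg v g) v = horner_alg v ((swapXY p).[g]).
Proof. by rewrite horner_swapXY_peval2 horner_alg_peval2 horner_algX. Qed.

Lemma swapXY_horner_eq0P (R : comNzRingType) (g : {poly R}) (p : {poly {poly R}}) :
  reflect (exists q, p = q * ('Y - g^:P)) ((swapXY p).[g] == 0).
Proof.
apply: (iffP (factor_theorem (swapXY p) g)) => [[q pq] | [q ->]].
  by exists (swapXY q); rewrite -[p]swapXYK pq rmorphM rmorphB /= swapXY_X swapXY_polyC.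
by exists (swapXY q); rewrite rmorphM rmorphB /= swapXY_Y swapXY_map_polyC.
Qed.

Lemma poly_eq0_of_inj_roots (R : idomainType) (q : {poly R}) (r : nat -> R) :
  injective r -> (forall n, root q (r n)) -> q = 0.
Proof.
move=> r_inj q_r; apply: (@roots_geq_poly_eq0 _ _ [seq r n | n <- iota 0 (size q)]).
- by apply/allP => _ /mapP[n _ ->].
- by rewrite map_inj_uniq ?iota_uniq.
- by rewrite size_map size_iota.
Qed.

Lemma horner_alg_scalar (A : algType CC) (x : CC) (q : {poly CC}) :
  horner_alg (x%:A : A) q = q.[x]%:A.
Proof.
elim/poly_ind: q => [|q c IHq]; first by rewrite rmorph0 horner0 scale0r.
rewrite rmorphD rmorphM /= IHq horner_algX horner_algC hornerMXaddC.
by rewrite -scalerAl mul1r scalerA scalerDl.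
Qed.

Lemma mulr_natPPV (n : nat) : (n.+1%:R : {poly {poly CC}}) * ((n.+1%:R : CC)^-1)%:P%:P = 1.
Proof.
have natPP : ((n.+1%:R : CC)%:P%:P : {poly {poly CC}}) = n.+1%:R by rewrite !rmorph_nat.
by rewrite -natPP -!polyCM mulfV ?natrCC_eq0.
Qed.

Lemma fxy_curve : fxy = 256%:R * ('Y - curve^:P).
Proof.
rewrite /curve map_polyZ /= -mul_polyC.
rewrite !(rmorph_nat, rmorphN, rmorphM, rmorphB, rmorphD, rmorph1) /= map_polyX.
set c := _%:P%:P; set Z := 3%:R * _.
have -> : 256%:R * ('Y - c * - Z) = 256%:R * 'Y + 256%:R * c * Z by ring.
by rewrite (mulr_natPPV 255) mul1r /fxy /polX /polY /Z mulrA.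
Qed.

Lemma fxy_dvdP p : (exists q, p = q * fxy) <-> (swapXY p).[curve] = 0.
Proof.
rewrite fxy_curve; split=> [[q ->] | /eqP/swapXY_horner_eq0P[q ->]].
  by apply/eqP/swapXY_horner_eq0P; exists (q * 256%:R); rewrite mulrA.
exists (q * ((256%:R : CC)^-1)%:P%:P).
by rewrite mulrA -(mulrA q) [_ * 256%:R]mulrC (mulr_natPPV 255) mulr1.
Qed.

Theorem lemma5p1 (k : OmegaIdx) (p : {poly {poly CC}}) :
  U_sl2_zero (fun (A : algType CC) (E F H : A) =>
                peval2 p (sharpOmega k E F H) (sharpdelta E F H))
  <-> (exists q : {poly {poly CC}}, p = q * fxy).
Proof.
have sharp_curve (A : algType CC) (E F H : A) : sl2_rel E F H ->
    peval2 p (sharpOmega k E F H) (sharpdelta E F H) =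
    horner_alg (sharpdelta E F H) ((swapXY p).[curve]).
  by move=> sl2; rewrite (sharpOmega_curve sl2) peval2_horner_alg.
rewrite fxy_dvdP; split=> [vanish | p_curve A E F H sl2]; last first.
  by rewrite sharp_curve // p_curve rmorph0.
apply: (poly_eq0_of_inj_roots irrep_delta_inj) => n.
have := vanish _ _ _ _ (irrep_sl2 n).
rewrite (sharp_curve _ _ _ _ (irrep_sl2 n)) sharpdelta_irrep horner_alg_scalar => /eqP.
by rewrite scaler_eq0 oner_eq0 orbF.
Qed.
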